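(* Let $X$ be a real Banach space, $x\in S_X$, $\delta\ge0$ and $0<t_1<t_2$. Then (1) $Q_{B_X}(t_2x,\delta)\subseteq Q_{B_X}(t_1x,\delta)\subseteq Q_{B_X}(t_2x,\frac{t_2}{t_1}\delta)$; (2) $Q_{S_X}(t_2x,\delta)\subseteq Q_{S_X}(t_1x,\delta)\subseteq Q_{S_X}(t_2x,\frac{t_2}{t_1}\delta)$.
   Context: $B_X,S_X$ are the closed unit ball and unit sphere. For non-empty bounded $F$ and $y\in X$, $r(F,y)=\sup_{z\in F}\|y-z\|$ and $Q_F(y,\delta)=\{z\in F:\|y-z\|\ge r(F,y)-\delta\}$. *)

From HB Require Import structures.
From mathcomp Require Import all_boot all_order all_algebra.
From mathcomp Require Import all_classical all_reals all_analysis.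
Set Implicit Arguments. Unset Strict Implicit. Unset Printing Implicit Defensive.
Import Order.TTheory GRing.Theory Num.Theory.
Import numFieldNormedType.Exports.
Local Open Scope classical_set_scope.
Local Open Scope ring_scope.

(* A real Banach space is a completeNormedModType over R : realType. *)

Definition unit_ball (R : realType) (X : normedModType R) : set X :=
  [set z | `|z| <= 1].
Definition unit_sphere (R : realType) (X : normedModType R) : set X :=
  [set z | `|z| = 1].

Definition farthest_rad (R : realType) (X : normedModType R) (F : set X) (y : X) : R :=
  sup [set `|y - z| | z in F].

Definition Qset (R : realType) (X : normedModType R) (F : set X) (y : X) (delta : R) : set X :=
  [set z | F z /\ farthest_rad F y - delta <= `|y - z|].

From HB Require Import structures.
From mathcomp Require Import all_boot all_order all_algebra.
From mathcomp Require Import all_classical all_reals all_analysis.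
From mathcomp Require Import ring lra.
Set Implicit Arguments. Unset Strict Implicit. Unset Printing Implicit Defensive.
Import Order.TTheory GRing.Theory Num.Theory.
Import numFieldNormedType.Exports.
Local Open Scope classical_set_scope.
Local Open Scope ring_scope.

(* For a unit vector x and any F inside the unit ball containing -x, the
   farthest point of F from t x is -x, so r(F, t x) = t + 1 for every t >= 0.
   Moving from t1 x to t2 x changes ||t x - z|| by at most t2 - t1 (triangle
   inequality), which gives the first inclusion.  For the second, t1 x - z is
   the convex combination (t1/t2)(t2 x - z) + (1 - t1/t2)(-z), and ||z|| <= 1. *)

Lemma normr_scaleB_le (R : numFieldType) (V : normedModType R) (x z : V) (s t : R) :
  s <= t -> `|t *: x - z| <= `|s *: x - z| + (t - s) * `|x|.
Proof.
move=> le_st; have -> : t *: x - z = (s *: x - z) + (t - s) *: x.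
  by rewrite scalerBl [RHS]addrC addrA subrK.
have ts_ge0 : 0 <= t - s by rewrite subr_ge0.
by apply: le_trans (ler_normD _ _) _; rewrite normrZ ger0_norm.
Qed.

Lemma normr_scaleB_convex (R : numFieldType) (V : normedModType R) (x z : V) (s t : R) :
  0 <= s -> s <= t -> t * `|s *: x - z| <= s * `|t *: x - z| + (t - s) * `|z|.
Proof.
move=> s_ge0 le_st; have t_ge0 := le_trans s_ge0 le_st.
have split_z : t *: (s *: x - z) = s *: (t *: x - z) + (t - s) *: (- z).
  by rewrite !scalerBr !scalerA mulrC scalerBl !scalerN opprK addrCA subrK addrC.
rewrite -[t in t * _](ger0_norm t_ge0) -normrZ split_z; apply: le_trans (ler_normD _ _) _.
by rewrite !normrZ normrN !ger0_norm ?subr_ge0.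
Qed.

Section FarthestPoints.
Variables (R : realType) (X : normedModType R) (F : set X) (x : X).
Hypotheses (x_unit : `|x| = 1) (F_ball : F `<=` @unit_ball R X) (F_antipode : F (- x)).

Lemma farthest_rad_scale (t : R) : 0 <= t -> farthest_rad F (t *: x) = t + 1.
Proof.
move=> t_ge0.
have ub : ubound [set `|t *: x - z| | z in F] (t + 1).
  move=> _ [z Fz <-]; apply: le_trans (ler_normB _ _) _.
  by rewrite normrZ x_unit mulr1 ger0_norm // lerD // F_ball.
have attained : [set `|t *: x - z| | z in F] (t + 1).
  exists (- x) => //; rewrite opprK -{2}(scale1r x) -scalerDl normrZ x_unit.
  by rewrite mulr1 ger0_norm // addr_ge0.
apply/le_anti; apply/andP; split.
  by apply: ge_sup => //; exists (t + 1).
by apply: sup_upper_bound => //; split; exists (t + 1).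
Qed.

Variables (delta t1 t2 : R).
Hypotheses (t1_gt0 : 0 < t1) (le_t12 : t1 <= t2).

Let t2_gt0 : 0 < t2. Proof. exact: lt_le_trans le_t12. Qed.

Lemma Qset_scale_down : Qset F (t2 *: x) delta `<=` Qset F (t1 *: x) delta.
Proof.
rewrite /Qset !farthest_rad_scale ?ltW // => z [Fz far_z]; split=> //.
have := normr_scaleB_le x z le_t12; rewrite x_unit; lra.
Qed.

Lemma Qset_scale_up : Qset F (t1 *: x) delta `<=` Qset F (t2 *: x) (t2 / t1 * delta).
Proof.
rewrite /Qset !farthest_rad_scale ?ltW // => z [Fz far_z]; split=> //.
have z_le1 : `|z| <= 1 := F_ball Fz.
have far_z' : t2 * (t1 + 1 - delta) <= t2 * `|t1 *: x - z| by rewrite ler_pM2l.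
have z_term : (t2 - t1) * `|z| <= t2 - t1 by rewrite ler_piMr ?subr_ge0.
have convex := normr_scaleB_convex x z (ltW t1_gt0) le_t12.
rewrite -(ler_pM2l t1_gt0) mulrBr mulrA mulrCA divff ?gt_eqF // mulr1.
lra.
Qed.

End FarthestPoints.

Theorem lemma2p13 (R : realType) (X : completeNormedModType R) (x : X)
  (delta t1 t2 : R) :
  @unit_sphere R X x -> 0 <= delta -> 0 < t1 -> t1 < t2 ->
  (Qset (@unit_ball R X) (t2 *: x) delta `<=` Qset (@unit_ball R X) (t1 *: x) delta /\
   Qset (@unit_ball R X) (t1 *: x) delta `<=` Qset (@unit_ball R X) (t2 *: x) (t2 / t1 * delta)) /\
  (Qset (@unit_sphere R X) (t2 *: x) delta `<=` Qset (@unit_sphere R X) (t1 *: x) delta /\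
   Qset (@unit_sphere R X) (t1 *: x) delta `<=` Qset (@unit_sphere R X) (t2 *: x) (t2 / t1 * delta)).
Proof.
rewrite /unit_sphere /= => x_unit _ t1_gt0 /ltW le_t12.
have antipode_ball : @unit_ball R X (- x) by rewrite /unit_ball /= normrN x_unit.
have antipode_sphere : @unit_sphere R X (- x) by rewrite /unit_sphere /= normrN.
have sphere_ball : @unit_sphere R X `<=` @unit_ball R X.
  by move=> z; rewrite /unit_sphere /unit_ball /= => ->.
by split; split; [apply: Qset_scale_down | apply: Qset_scale_up
  | apply: Qset_scale_down | apply: Qset_scale_up].
Qed.
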